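(* Let $S_1$ be an arbitrary path string (possibly not canonical) and let $S_2$ be a canonical path string, and assume that neither contains symbolic links. Then $\mathrm{sanitize}(S_1,[S_2])$ returns true if and only if $S_1$ and $S_2$ refer to the same file on the file system.
   Context: Path strings are strings over valid filename characters together with ''.'' and ''/''. Tokenization of a path string splits it on every maximal run of one or more consecutive ''/'' characters and discards empty pieces (as C's strtok_r with separator ''/'' does); e.g. ''//a//b/c'' tokenizes to a, b, c. A path string is canonical (canonicalized) if it is ''/'' or of the form ''/$a_1$/$a_2$/.../$a_n$'' with $n\ge 1$, where each $a_j$ is a nonempty filename containing no ''/'' and different from ''.'' and ''..''. The algorithm sanitize takes a path string $U$ and a list $W$ of path strings. It starts with an empty stack of tokens and processes the tokens of $U$ from left to right: if the token is ''..'', it pops the top of the stack if the stack is nonempty and otherwise does nothing; if the token is ''.'', it does nothing; otherwise it pushes the token. The string representation of the final stack with contents $t_1,\dots,t_m$ (bottom to top) is ''/'' if $m=0$ and ''/$t_1$/$t_2$/.../$t_m$'' (no trailing slash) if $m\ge1$. sanitize returns true if this string is an element of $W$ (exact string equality) and false otherwise. Path strings are interpreted in a hierarchical (tree-shaped) file system rooted at ''/'', with no symbolic links and no wildcards: starting at the root, a filename token moves to the child of that name, ''.'' stays in the current directory, and ''..'' moves to the parent directory (the parent of the root being the root). Two path strings refer to the same file if this resolution leads to the same file. *)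

From Stdlib Require Import String Ascii List Bool.
Import ListNotations.
Open Scope string_scope.

Definition slash : ascii := "/"%char.

Fixpoint tok_aux (s : string) (cur : string) : list string :=
  match s with
  | EmptyString => if String.eqb cur "" then [] else [cur]
  | String c s' =>
      if Ascii.eqb c slash
      then (if String.eqb cur "" then [] else [cur]) ++ tok_aux s' ""
      else tok_aux s' (cur ++ String c "")
  end.

Definition tokenize (s : string) : list string := tok_aux s "".

Definition render (l : list string) : string :=
  match l with
  | [] => "/"
  | _ => String.concat "" (map (fun t => "/" ++ t) l)
  end.

(* The stack is kept as a list with its top at the head. *)
Definition sanitize_step (stk : list string) (t : string) : list string :=
  if String.eqb t ".." then (match stk with [] => [] | _ :: stk' => stk' end)
  else if String.eqb t "." then stk
  else t :: stk.

Definition sanitize_stack (U : string) : list string :=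
  fold_left sanitize_step (tokenize U) [].

Definition sanitize (U : string) (W : list string) : bool :=
  existsb (fun w => String.eqb (render (rev (sanitize_stack U))) w) W.

Definition valid_component (a : string) : Prop :=
  a <> "" /\ (forall i, String.get i a <> Some slash) /\ a <> "." /\ a <> "..".

Definition canonical (s : string) : Prop :=
  exists l : list string, Forall valid_component l /\ s = render l.

Record FileSystem := {
  fnode : Type;
  froot : fnode;
  fparent : fnode -> fnode;
  fchild : fnode -> string -> fnode;
  fparent_root : fparent froot = froot;
  fparent_child : forall x a, fparent (fchild x a) = x;
  fchild_inj : forall x y a b, fchild x a = fchild y b -> x = y /\ a = b;
  fchild_not_root : forall x a, fchild x a <> froot;
  freachable : forall x, exists l : list string, x = fold_left fchild l froot
}.

Definition resolve_step (fs : FileSystem) (x : fnode fs) (t : string) : fnode fs :=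
  if String.eqb t ".." then fparent fs x
  else if String.eqb t "." then x
  else fchild fs x t.

Definition resolve (fs : FileSystem) (s : string) : fnode fs :=
  fold_left (resolve_step fs) (tokenize s) (froot fs).

Definition same_file (fs : FileSystem) (s1 s2 : string) : Prop :=
  resolve fs s1 = resolve fs s2.

(* The stack kept by sanitize is a faithful name for the node reached by
   resolution: reading the stack bottom-up as a chain of children from the
   root gives the current node after every token, because ".." on an empty
   stack matches the parent of the root being the root.  In a tree this
   reading is injective, so two paths reach the same file iff their final
   stacks agree.  A canonical string tokenizes back to its components, so
   sanitize turns it into exactly its own component stack, and rendering is
   injective on stacks of valid components; hence comparing the rendered
   stack with S2 is the same as comparing stacks. *)
From Stdlib Require Import String List Bool.
Import ListNotations.
Open Scope string_scope.

Lemma append_empty_r (s : string) : s ++ "" = s.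
Proof. induction s; simpl; congruence. Qed.

Lemma append_assoc (a b c : string) : (a ++ b) ++ c = a ++ (b ++ c).
Proof. induction a; simpl; congruence. Qed.

Lemma concat_empty_cons (x : string) (xs : list string) :
  String.concat "" (x :: xs) = x ++ String.concat "" xs.
Proof. destruct xs; simpl; [rewrite append_empty_r|]; reflexivity. Qed.

Fixpoint slash_free (s : string) : bool :=
  match s with
  | EmptyString => true
  | String c s' => negb (Ascii.eqb c slash) && slash_free s'
  end.

Lemma slash_freeP (s : string) :
  slash_free s = true <-> (forall i, String.get i s <> Some slash).
Proof.
  induction s as [|c s IH]; simpl.
  - split; [intros _ [|i]; discriminate | reflexivity].
  - rewrite andb_true_iff, negb_true_iff, IH. split.
    + intros [Hc Hs] [|i]; simpl; [|apply Hs].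
      intros [= ->]. now rewrite Ascii.eqb_refl in Hc.
    + intros H. split; [|intro i; apply (H (S i))].
      apply Ascii.eqb_neq. intros ->. now apply (H 0).
Qed.

Lemma slash_free_append (a b : string) :
  slash_free (a ++ b) = slash_free a && slash_free b.
Proof. induction a; simpl; [|rewrite IHa, andb_assoc]; reflexivity. Qed.

Definition token (t : string) : Prop := t <> "" /\ slash_free t = true.

Lemma tok_aux_token (s cur : string) :
  slash_free cur = true -> Forall token (tok_aux s cur).
Proof.
  revert cur; induction s as [|c s IH]; intros cur Hcur; simpl.
  - destruct (String.eqb_spec cur ""); repeat constructor; assumption.
  - destruct (Ascii.eqb c slash) eqn:Hc.
    + apply Forall_app; split; [|now apply IH].
      destruct (String.eqb_spec cur ""); repeat constructor; assumption.
    + apply IH. now rewrite slash_free_append, Hcur; simpl; rewrite Hc.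
Qed.

Lemma tokenize_token (s : string) : Forall token (tokenize s).
Proof. now apply tok_aux_token. Qed.

Lemma tok_aux_append_slash_free (t s cur : string) :
  slash_free t = true -> tok_aux (t ++ s) cur = tok_aux s (cur ++ t).
Proof.
  revert cur; induction t as [|c t IH]; intros cur Ht; simpl.
  - now rewrite append_empty_r.
  - simpl in Ht. apply andb_true_iff in Ht as [Hc Ht].
    apply negb_true_iff in Hc. now rewrite Hc, IH, append_assoc.
Qed.

Lemma valid_component_token (a : string) : valid_component a -> token a.
Proof. intros (Hne & Hslash & _). split; [|apply slash_freeP]; assumption. Qed.

Lemma tok_aux_render (l : list string) (t : string) :
  Forall valid_component l -> token t ->
  tok_aux (String.concat "" (map (fun a => "/" ++ a) l)) t = t :: l.
Proof.
  revert t; induction l as [|a l IH]; intros t Hl [Hne Ht].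
  - simpl. now destruct (String.eqb_spec t "").
  - inversion_clear Hl as [|? ? Ha Hl'].
    destruct (valid_component_token a Ha) as [Hane Ha'].
    rewrite map_cons, concat_empty_cons. simpl.
    destruct (String.eqb_spec t ""); [contradiction|].
    simpl. rewrite tok_aux_append_slash_free by assumption. simpl.
    now rewrite IH.
Qed.

Lemma tokenize_render (l : list string) :
  Forall valid_component l -> tokenize (render l) = l.
Proof.
  destruct l as [|a l]; intros Hl; [reflexivity|].
  inversion Hl as [|? ? Ha Hl']; subst.
  destruct (valid_component_token a Ha) as [Hane Ha'].
  unfold tokenize, render. rewrite map_cons, concat_empty_cons. simpl.
  rewrite tok_aux_append_slash_free by assumption. simpl.
  now apply tok_aux_render.
Qed.

Lemma render_inj (l l' : list string) :
  Forall valid_component l -> Forall valid_component l' ->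
  render l = render l' -> l = l'.
Proof.
  intros Hl Hl' E. now rewrite <- (tokenize_render l), E, tokenize_render.
Qed.

Lemma fold_sanitize_step_valid (l stk : list string) :
  Forall valid_component l -> fold_left sanitize_step l stk = (rev l ++ stk)%list.
Proof.
  revert stk; induction l as [|a l IH]; intros stk Hl; [reflexivity|].
  inversion_clear Hl as [|? ? (_ & _ & Hdot & Hdotdot) Hl'].
  simpl. rewrite IH by assumption. unfold sanitize_step.
  destruct (String.eqb_spec a ".."); [contradiction|].
  destruct (String.eqb_spec a "."); [contradiction|].
  now rewrite <- app_assoc.
Qed.

Lemma sanitize_stack_render (l : list string) :
  Forall valid_component l -> sanitize_stack (render l) = rev l.
Proof.
  intros Hl. unfold sanitize_stack.
  now rewrite tokenize_render, fold_sanitize_step_valid, app_nil_r.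
Qed.

Lemma fold_sanitize_step_stack_valid (l stk : list string) :
  Forall token l -> Forall valid_component stk ->
  Forall valid_component (fold_left sanitize_step l stk).
Proof.
  revert stk; induction l as [|t l IH]; intros stk Hl Hstk; [assumption|].
  inversion_clear Hl as [|? ? [Hne Ht] Hl']. simpl. apply IH; [assumption|].
  unfold sanitize_step.
  destruct (String.eqb_spec t "..").
  - destruct stk; [constructor|]. now inversion Hstk.
  - destruct (String.eqb_spec t "."); [assumption|].
    constructor; [|assumption].
    repeat split; try assumption. now apply slash_freeP.
Qed.

Lemma sanitize_stack_valid (s : string) :
  Forall valid_component (sanitize_stack s).
Proof. apply fold_sanitize_step_stack_valid; [apply tokenize_token | constructor]. Qed.

Lemma sanitize_single (S1 S2 : string) :
  sanitize S1 [S2] = true <-> render (rev (sanitize_stack S1)) = S2.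
Proof. unfold sanitize; simpl. now rewrite orb_false_r, String.eqb_eq. Qed.

Section StackNode.

Variable fs : FileSystem.

Definition stack_node (stk : list string) : fnode fs :=
  fold_left (fchild fs) (rev stk) (froot fs).

Lemma stack_node_cons (a : string) (stk : list string) :
  stack_node (a :: stk) = fchild fs (stack_node stk) a.
Proof. unfold stack_node. simpl. now rewrite fold_left_app. Qed.

Lemma stack_node_sanitize_step (stk : list string) (t : string) :
  stack_node (sanitize_step stk t) = resolve_step fs (stack_node stk) t.
Proof.
  unfold sanitize_step, resolve_step.
  destruct (String.eqb t "..").
  - destruct stk as [|a stk].
    + symmetry. apply fparent_root.
    + now rewrite stack_node_cons, fparent_child.
  - destruct (String.eqb t "."); [reflexivity|]. apply stack_node_cons.
Qed.

Lemma resolve_sanitize_stack (s : string) :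
  resolve fs s = stack_node (sanitize_stack s).
Proof.
  unfold resolve, sanitize_stack.
  change (froot fs) with (stack_node []).
  generalize (@nil string); induction (tokenize s) as [|t l IH]; intros stk.
  - reflexivity.
  - simpl. now rewrite <- stack_node_sanitize_step.
Qed.

Lemma stack_node_inj (stk stk' : list string) :
  stack_node stk = stack_node stk' -> stk = stk'.
Proof.
  revert stk'; induction stk as [|a stk IH]; intros [|b stk'] E.
  - reflexivity.
  - rewrite stack_node_cons in E. now destruct (fchild_not_root fs _ _ (eq_sym E)).
  - rewrite stack_node_cons in E. now destruct (fchild_not_root fs _ _ E).
  - rewrite !stack_node_cons in E. apply fchild_inj in E as [E ->].
    now rewrite (IH _ E).
Qed.

End StackNode.

Theorem theorem1 :
  forall (fs : FileSystem) (S1 S2 : string),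
    canonical S2 ->
    (sanitize S1 [S2] = true <-> same_file fs S1 S2).
Proof.
  intros fs S1 S2 [l [Hl ->]].
  rewrite sanitize_single. unfold same_file.
  rewrite !resolve_sanitize_stack, sanitize_stack_render by exact Hl.
  split; intros E.
  - apply render_inj in E; [|apply Forall_rev, sanitize_stack_valid | exact Hl].
    now rewrite <- E, rev_involutive.
  - apply stack_node_inj in E. now rewrite E, rev_involutive.
Qed.
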